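(* Let $Q$ be an operator circuit, let $x$ be an input string, and let $T_Q(G,M)$ be the tensor circuit constructed from $Q$ and $x$ as described in the context. Then the value of $T_Q(G,M)$ equals $\|Q(x)_0\|^2$.
   Context: Let $A=\mathbb{C}^2$ with orthonormal basis $|0\rangle,|1\rangle$. Operator circuits: an operator circuit $Q$ has $n$ input qubits and $m$ output qubits, one of which is marked as the answer qubit. Its gates are arbitrary linear maps $g:A^{\otimes k}\to A^{\otimes\ell}$. For $x\in\{0,1\}^n$, $Q(x)_0$ is the projection of $Q(x)$ onto the subspace in which the answer qubit is $|0\rangle$. Adjoint gate: for a gate $g$, its adjoint $g^*$ is the linear map determined by $\langle y|g^*z\rangle=\langle gy|z\rangle$. The circuit $Q'$: first apply $Q$; then apply to the answer qubit a one-qubit gate that projects onto $|0\rangle$; then apply the circuit $Q$ flipped upside down, with every gate $g$ replaced by $g^*$. So $Q'$ maps $n$ qubits to $n$ qubits. Tensor circuits: for a finite graph $G$, a labeling is a map $l:E(G)\to\{0,1\}$. For a vertex $v$, let $G_v$ be the star of $v$, i.e. the subgraph consisting of $v$, its incident edges and their endpoints. A tensor at $v$ is a map $m_v$ from labelings of the edges of $G_v$ to $\mathbb{C}$. A tensor circuit $(G,M)$ is a graph $G$ with a tensor $m_v$ at every vertex. Its value is $$\sum_{l:E(G)\to\{0,1\}}\ \prod_{v\in V(G)} m_v(l|_{E(G_v)}).$$ For a set $E$ of edges and a labeling $l$, $\alpha^{l(E)}$ denotes the basis vector $\bigotimes_{e\in E}|l(e)\rangle$ of $A^{\otimes E}$.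 Construction of $T_Q(G,M)$: $G$ is the graph of $Q'$. It has one vertex for each gate of $Q'$ (including the projection gate), one degree-1 vertex for each of the $n$ input qubits, one degree-1 vertex for each of the $n$ output qubits, and one edge for each wire. The tensors are as follows. - For a vertex $v$ of a gate $g$ with input-wire edges $E_1$ and output-wire edges $E_2$: $m_v(l)$ is the coefficient of $\alpha^{l(E_2)}$ in $g(\alpha^{l(E_1)})$. - For the vertex of the projection gate, whose two edges carry labels $a,b$: $m_v(0,0)=1$, and $m_v(a,b)=0$ otherwise. - For the vertex of the $i$-th input qubit and for the vertex of the $i$-th output qubit of $Q'$: $m_v(x_i)=1$ and $m_v(1-x_i)=0$. *)

From mathcomp Require Import all_boot all_order all_algebra.
Set Implicit Arguments. Unset Strict Implicit. Unset Printing Implicit Defensive.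
Import Order.TTheory GRing.Theory Num.Theory.
Local Open Scope ring_scope.

(* Scalars: C is any numClosedFieldType (the complex numbers are one), with  *)
(* complex conjugation z^* .  A qubit A = C^2 has basis |false> = |0>,       *)
(* |true> = |1>.  A basis vector of A^{(x) k} is a bit sequence of length k.  *)

(* An operator circuit, given as a wire diagram.
   - [wire] : the finite set of wires;
   - input qubit i is carried by wire [in_wire i], output qubit j by
     wire [out_wire j]; [answer] is the marked answer qubit;
   - the gates are numbered 0 .. n_gates-1 in the order of application;
     gate j reads the wires [gate_in j] (in this order, i.e. its k tensor
     factors) and produces the wires [gate_out j];
   - the gate j is the linear map g_j : A^{(x)k} -> A^{(x)l} determined by
     g_j (alpha^a) = \sum_b gate_coef j a b alpha^b
     (a of length k = size (gate_in j), b of length l = size (gate_out j));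
     this is an arbitrary linear map. *)
Record opcircuit (C : numClosedFieldType) := OpCircuit {
  wire : finType;
  n_in : nat;
  n_out : nat;
  n_gates : nat;
  in_wire : 'I_n_in -> wire;
  out_wire : 'I_n_out -> wire;
  answer : 'I_n_out;
  gate_in : 'I_n_gates -> seq wire;
  gate_out : 'I_n_gates -> seq wire;
  gate_coef : 'I_n_gates -> seq bool -> seq bool -> C }.

Arguments in_wire {C} _ _.
Arguments out_wire {C} _ _.
Arguments answer {C} _.
Arguments gate_in {C} _ _.
Arguments gate_out {C} _ _.
Arguments gate_coef {C} _ _ _ _.

Definition wf_circuit (C : numClosedFieldType) (Q : opcircuit C) : Prop :=
  [/\ forall e : wire Q,
        (#|[pred i | in_wire Q i == e]| + \sum_(j < n_gates Q) count_mem e (gate_out Q j))%N = 1%N,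
      forall e : wire Q,
        (#|[pred o | out_wire Q o == e]| + \sum_(j < n_gates Q) count_mem e (gate_in Q j))%N = 1%N
    & forall (e : wire Q) (j j' : 'I_(n_gates Q)),
        e \in gate_out Q j -> e \in gate_in Q j' -> (j < j')%N].

(* A state of the register of currently live wires is represented as a
   function of a labeling of all wires (it depends only on the live ones). *)
Definition labeling (C : numClosedFieldType) (Q : opcircuit C) :=
  {ffun wire Q -> bool}.

Definition relabel (W : finType) (l : {ffun W -> bool}) (s : seq W) (a : seq bool)
  : {ffun W -> bool} :=
  [ffun e => if e \in s then nth false a (index e s) else l e].

Definition init_state (C : numClosedFieldType) (Q : opcircuit C)
  (x : 'I_(n_in Q) -> bool) : labeling Q -> C :=
  fun l => if [forall i, l (in_wire Q i) == x i] then 1 else 0.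

Definition apply_gate (C : numClosedFieldType) (Q : opcircuit C)
  (j : 'I_(n_gates Q)) (psi : labeling Q -> C) : labeling Q -> C :=
  fun l => \sum_(a : (size (gate_in Q j)).-tuple bool)
     gate_coef Q j a [seq l e | e <- gate_out Q j] * psi (relabel l (gate_in Q j) a).

Definition run (C : numClosedFieldType) (Q : opcircuit C)
  (x : 'I_(n_in Q) -> bool) : labeling Q -> C :=
  foldl (fun psi j => apply_gate j psi) (init_state x) (enum 'I_(n_gates Q)).

(* Q(x), as a vector of A^{(x) m}: coordinate at basis vector y *)
Definition circ_out (C : numClosedFieldType) (Q : opcircuit C)
  (x : 'I_(n_in Q) -> bool) (y : {ffun 'I_(n_out Q) -> bool}) : C :=
  run x [ffun e => [exists o, (out_wire Q o == e) && y o]].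

(* Q(x)_0 : projection onto answer qubit = |0> *)
Definition circ_out0 (C : numClosedFieldType) (Q : opcircuit C)
  (x : 'I_(n_in Q) -> bool) (y : {ffun 'I_(n_out Q) -> bool}) : C :=
  if y (answer Q) then 0 else circ_out x y.

Definition norm2 (C : numClosedFieldType) (m : nat)
  (v : {ffun 'I_m -> bool} -> C) : C :=
  \sum_(y : {ffun 'I_m -> bool}) `|v y| ^+ 2.

(* A tensor circuit: a finite graph given by its vertices, edges and, for
   each vertex v, the list of edges of its star G_v (in a fixed order); the
   tensor m_v is a map from labelings of E(G_v), i.e. from the labels of the
   star edges listed in that order, to C. *)
Record tensor_circuit (C : numClosedFieldType) := TensorCircuit {
  tc_vertex : finType;
  tc_edge : finType;
  tc_star : tc_vertex -> seq tc_edge;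
  tc_tensor : tc_vertex -> seq bool -> C }.

Definition tc_value (C : numClosedFieldType) (T : tensor_circuit C) : C :=
  \sum_(l : {ffun tc_edge T -> bool})
     \prod_(v : tc_vertex T) tc_tensor v [seq l e | e <- tc_star v].

(* Q' = Q ; projection |0><0| on the answer qubit ; Q flipped with adjoints.
   Wires of Q': every wire e of Q (left copy, [inl e]) together with a mirror
   copy [inr e] of every wire e of Q that is not a non-answer output wire of
   Q (a non-answer output wire of Q flows directly into the flipped circuit,
   so it is a single wire of Q'). *)
Definition mirrored (C : numClosedFieldType) (Q : opcircuit C) (e : wire Q) : bool :=
  [forall o, (out_wire Q o == e) ==> (o == answer Q)].

Definition TQ_edge (C : numClosedFieldType) (Q : opcircuit C) : finType :=
  (wire Q + {e : wire Q | mirrored e})%type.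

Definition mir (C : numClosedFieldType) (Q : opcircuit C) (e : wire Q) : TQ_edge Q :=
  match insub e with Some e' => inr e' | None => inl e end.

(* vertices: n input vertices, n output vertices (of Q'), the gates of Q,
   the projection gate, the adjoint gates of the flipped Q *)
Definition TQ_vertex (C : numClosedFieldType) (Q : opcircuit C) : finType :=
  ('I_(n_in Q) + 'I_(n_in Q) + ('I_(n_gates Q) + unit + 'I_(n_gates Q)))%type.

Definition TQ_star (C : numClosedFieldType) (Q : opcircuit C)
  (v : TQ_vertex Q) : seq (TQ_edge Q) :=
  match v with
  | inl (inl i) => [:: inl (in_wire Q i)]
  | inl (inr i) => [:: @mir C Q (in_wire Q i)]
  | inr (inl (inl j)) => map inl (gate_in Q j) ++ map inl (gate_out Q j)
  | inr (inl (inr tt)) => [:: inl (out_wire Q (answer Q)); @mir C Q (out_wire Q (answer Q))]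
  | inr (inr j) => map (@mir C Q) (gate_out Q j) ++ map (@mir C Q) (gate_in Q j)
  end.

(* For a gate g with input edges E1 and output edges E2 (listed in
   this order in the star), m_v(l) = coefficient of alpha^{l(E2)} in
   g(alpha^{l(E1)}).  The adjoint g_j^* : A^{(x)l} -> A^{(x)k} of gate j has
   coefficient of alpha^c in g_j^*(alpha^b) equal to
   <alpha^c | g_j^* alpha^b> = <g_j alpha^c | alpha^b> = (gate_coef j c b)^*. *)
Definition TQ_tensor (C : numClosedFieldType) (Q : opcircuit C)
  (x : 'I_(n_in Q) -> bool) (v : TQ_vertex Q) (s : seq bool) : C :=
  match v with
  | inl (inl i) => if s == [:: x i] then 1 else 0
  | inl (inr i) => if s == [:: x i] then 1 else 0
  | inr (inl (inl j)) =>
      let k := size (gate_in Q j) in gate_coef Q j (take k s) (drop k s)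
  | inr (inl (inr tt)) => if s == [:: false; false] then 1 else 0
  | inr (inr j) =>
      let k := size (gate_out Q j) in (gate_coef Q j (drop k s) (take k s))^*
  end.

Definition TQ (C : numClosedFieldType) (Q : opcircuit C) (x : 'I_(n_in Q) -> bool)
  : tensor_circuit C :=
  @TensorCircuit C (TQ_vertex Q) (TQ_edge Q) (@TQ_star C Q) (TQ_tensor x).

From mathcomp Require Import all_boot all_order all_algebra zify ring.
Set Implicit Arguments. Unset Strict Implicit. Unset Printing Implicit Defensive.
Import GRing.Theory Num.Theory.
Local Open Scope ring_scope.

(* Expanding the gates one at a time writes Q(x) as a path sum: its coordinate
   at y is the sum, over the labelings L of all wires of Q that agree with x on
   the inputs and with y on the outputs, of the weight of L, the product of the
   gate coefficients read off L.  Hence |Q(x)_0|^2 is the sum of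
   weight L * (weight L')^* over the pairs (L, L') that agree on the outputs
   and put 0 on the answer wire.  A labeling of the graph of Q' is exactly such
   a pair, glued along the non-answer output wires that Q and its mirror image
   share, and its product of vertex tensors is weight L * (weight L')^* times
   the projection indicator. *)

Lemma sorted_rcons (T : Type) (r : rel T) (s : seq T) (y : T) :
  transitive r -> sorted r (rcons s y) = sorted r s && all (r^~ y) s.
Proof.
by move=> r_trans; rewrite !sorted_pairwise // pairwise_rcons andbC.
Qed.

Lemma map_nth_index (T : eqType) (U : Type) (u0 : U) (s : seq T) (a : seq U) :
  uniq s -> size a = size s -> [seq nth u0 a (index e s) | e <- s] = a.
Proof.
move=> s_uniq size_a; apply: (@eq_from_nth _ u0); rewrite size_map ?size_a // => i lt_i_s.
by case: s lt_i_s s_uniq {size_a} => // e0 s lt_i_s s_uniq; rewrite (nth_map e0) // index_uniq.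
Qed.

Lemma prodr_indicator (R : comPzSemiRingType) (I : finType) (b : pred I) :
  \prod_(i : I) (if b i then 1 else 0 : R) = if [forall i, b i] then 1 else 0.
Proof.
have [/forallP b_all | /forallPn[i /negbTE bNi]] := boolP [forall i, b i].
  by apply: big1 => i _; rewrite b_all.
by rewrite (bigD1 i) //= bNi mul0r.
Qed.

Section Circuit.
Variables (C : numClosedFieldType) (Q : opcircuit C) (x : 'I_(n_in Q) -> bool).
Hypothesis wfQ : wf_circuit Q.

Lemma gate_in_uniq j : uniq (gate_in Q j).
Proof.
apply: count_mem_uniq => e; have [_ /(_ e) + _] := wfQ.
rewrite (bigD1 j) //= -has_pred1 has_count; set c := count _ _; clearbody c.
by case: c => [|[|c]] //=; lia.
Qed.

Lemma gate_in_disjoint j j' e : e \in gate_in Q j -> e \in gate_in Q j' -> j = j'.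
Proof.
move=> e_j e_j'; apply/eqP/negPn/negP => neq_jj'.
have [_ /(_ e) + _] := wfQ; rewrite (bigD1 j) // (bigD1 j') /= 1?eq_sym //.
move: e_j e_j'; rewrite -!has_pred1 !has_count.
set c := count _ (gate_in Q j); set c' := count _ (gate_in Q j'); lia.
Qed.

Lemma out_wire_inj : injective (out_wire Q).
Proof.
move=> o o' eq_oo'; have [_ /(_ (out_wire Q o)) consumed_once _] := wfQ.
have /card_le1_eqP : (#|[pred o'' | out_wire Q o'' == out_wire Q o]| <= 1)%N by lia.
by apply; rewrite !inE ?eq_oo'.
Qed.

Definition consumed (s : seq 'I_(n_gates Q)) (e : wire Q) : bool :=
  has (fun j => e \in gate_in Q j) s.

Lemma consumedNP e :
  reflect (exists o, out_wire Q o = e) (~~ consumed (enum 'I_(n_gates Q)) e).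
Proof.
have -> : ~~ consumed (enum 'I_(n_gates Q)) e =
          (\sum_(j < n_gates Q) count_mem e (gate_in Q j) == 0)%N.
  rewrite sum_nat_eq0; apply/hasPn/forallP => [e_free j | e_free j _] /=.
    by apply/eqP/count_memPn/e_free; rewrite mem_enum.
  exact/count_memPn/eqP/e_free.
have [_ /(_ e) consumed_once _] := wfQ.
apply: (iffP eqP) => [no_gate | [o out_o]].
- have /card_gt0P[o /eqP out_o] : (0 < #|[pred o | out_wire Q o == e]|)%N by lia.
  by exists o.
- have : (0 < #|[pred o | out_wire Q o == e]|)%N by apply/card_gt0P; exists o; rewrite inE out_o.
  lia.
Qed.

Lemma gate_in_unconsumed (s : seq 'I_(n_gates Q)) (j : 'I_(n_gates Q)) e :
  j \notin s -> e \in gate_in Q j -> ~~ consumed s e.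
Proof.
move=> j_notin_s e_j; apply/hasPn => j' j'_s /=; apply: contraNN j_notin_s => e_j'.
by rewrite (gate_in_disjoint e_j e_j').
Qed.

Lemma gate_out_unconsumed (s : seq 'I_(n_gates Q)) (j : 'I_(n_gates Q)) e :
  all (fun j' : 'I_(n_gates Q) => (j' <= j)%N) s -> e \in gate_out Q j -> ~~ consumed s e.
Proof.
move=> s_le_j e_out; apply/hasPn => j' /(allP s_le_j) /= le_j'j.
have [_ _ /(_ e j j' e_out) lt_jj'] := wfQ.
by apply/negP => /lt_jj'; rewrite ltnNge le_j'j.
Qed.

Definition partial_weight (s : seq 'I_(n_gates Q)) (L : {ffun wire Q -> bool}) : C :=
  init_state x L *
  \prod_(j <- s) gate_coef Q j [seq L e | e <- gate_in Q j] [seq L e | e <- gate_out Q j].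

Lemma agree_relabel s j l (a : (size (gate_in Q j)).-tuple bool) (L : {ffun wire Q -> bool}) :
  j \notin s ->
  [forall e, ~~ consumed s e ==> (L e == relabel l (gate_in Q j) a e)] =
  [forall e, ~~ consumed (rcons s j) e ==> (L e == l e)] &&
  (a == map_tuple L (in_tuple (gate_in Q j))).
Proof.
move=> j_notin_s; have in_unconsumed := gate_in_unconsumed j_notin_s.
apply/idP/andP => [/forallP agree | [/forallP agree /eqP->]].
  split.
    apply/forallP => e; apply/implyP; rewrite /consumed has_rcons negb_or => /andP[e_in e_s].
    by have := implyP (agree e) e_s; rewrite ffunE (negbTE e_in).
  apply/eqP/val_inj; rewrite /= -[LHS](map_nth_index false (gate_in_uniq j)) ?size_tuple //.
  apply/eq_in_map => e e_in; have := implyP (agree e) (in_unconsumed e e_in).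
  by rewrite ffunE e_in => /eqP.
apply/forallP => e; apply/implyP => e_s; rewrite ffunE; case: ifP => e_in.
  by rewrite /= (nth_map e) ?index_mem // nth_index.
by apply: (implyP (agree e)); rewrite /consumed has_rcons e_in.
Qed.

Lemma apply_gates_path_sum s l : sorted (relpre val ltn) s ->
  foldl (fun psi j => apply_gate j psi) (init_state x) s l =
  \sum_(L : {ffun wire Q -> bool} | [forall e, ~~ consumed s e ==> (L e == l e)])
     partial_weight s L.
Proof.
elim/last_ind: s l => [|s j IHs] l.
  move=> _; rewrite (big_pred1 l) /partial_weight ?big_nil ?mulr1 // => L.
  apply/forallP/eqP => [agree | -> e]; last by rewrite eqxx implybT.
  by apply/ffunP => e; apply/eqP/agree.
rewrite sorted_rcons; last by move=> ? ? ?; apply: ltn_trans.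
case/andP => s_sorted s_lt_j.
have j_notin_s : j \notin s by apply/negP => /(allP s_lt_j); rewrite /= ltnn.
have out_j_agree L e : [forall e, ~~ consumed (rcons s j) e ==> (L e == l e)] ->
    e \in gate_out Q j -> L e = l e.
  move=> /forallP/(_ e)/implyP agree e_out; apply/eqP/agree/(gate_out_unconsumed _ e_out).
  by rewrite all_rcons leqnn; apply: sub_all s_lt_j => j' /ltnW.
rewrite foldl_rcons /apply_gate; under eq_bigr do rewrite IHs //.
under eq_bigr do rewrite big_distrr /= big_mkcond /=.
rewrite exchange_big /= [RHS]big_mkcond /=; apply: eq_bigr => L _.
under eq_bigr do rewrite agree_relabel //.
case: ifP => [agree | _]; last by rewrite big1.
rewrite /= -big_mkcond /= (big_pred1 (map_tuple L (in_tuple (gate_in Q j)))) //.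
rewrite /partial_weight -cats1 big_cat big_seq1 /= mulrCA [X in _ = _ * X]mulrC.
by congr (_ * (gate_coef _ _ _ _ * _)); apply/eq_in_map => e /(out_j_agree L e agree).
Qed.

Definition weight (L : {ffun wire Q -> bool}) : C :=
  init_state x L *
  \prod_(j < n_gates Q) gate_coef Q j [seq L e | e <- gate_in Q j] [seq L e | e <- gate_out Q j].

Lemma partial_weight_enum L : partial_weight (enum 'I_(n_gates Q)) L = weight L.
Proof. by rewrite /partial_weight big_enum. Qed.

Lemma circ_out_path_sum y : circ_out x y =
  \sum_(L : {ffun wire Q -> bool} | [forall o, L (out_wire Q o) == y o]) weight L.
Proof.
rewrite /circ_out /run apply_gates_path_sum; last first.
  by rewrite -sorted_map val_enum_ord iota_ltn_sorted.
have out_label o : [exists o', (out_wire Q o' == out_wire Q o) && y o'] = y o.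
  by apply/existsP/idP => [[o' /andP[/eqP/out_wire_inj ->]] | y_o] //; exists o; rewrite eqxx.
apply: eq_big => [L | L _]; last exact: partial_weight_enum.
apply/forallP/forallP => [agree o | agree e].
  have /implyP := agree (out_wire Q o); rewrite ffunE out_label; apply.
  by apply/consumedNP; exists o.
by apply/implyP => /consumedNP[o <-]; rewrite ffunE out_label.
Qed.

Lemma sqr_norm_circ_out0 y : `|circ_out0 x y| ^+ 2 =
  \sum_(L : {ffun wire Q -> bool}) \sum_(L' : {ffun wire Q -> bool})
    (if [&& ~~ y (answer Q), [forall o, L (out_wire Q o) == y o]
          & [forall o, L' (out_wire Q o) == y o]]
     then weight L * (weight L')^* else 0).
Proof.
rewrite /circ_out0; case: (y (answer Q)) => /=.
  by rewrite normr0 expr0n /=; symmetry; apply: big1 => L _; apply: big1.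
rewrite normCK circ_out_path_sum rmorph_sum big_distrl /= big_mkcond /=.
apply: eq_bigr => L _; case: ifP => _; last by rewrite big1.
by rewrite big_distrr /= big_mkcond.
Qed.

Lemma norm2_circ_out0 : norm2 (circ_out0 x) =
  \sum_(L : {ffun wire Q -> bool}) \sum_(L' : {ffun wire Q -> bool})
    (if [forall o, L (out_wire Q o) == L' (out_wire Q o)] && ~~ L (out_wire Q (answer Q))
     then weight L * (weight L')^* else 0).
Proof.
rewrite /norm2; under eq_bigr do rewrite sqr_norm_circ_out0.
rewrite exchange_big /=; apply: eq_bigr => L _.
rewrite exchange_big /=; apply: eq_bigr => L' _.
rewrite -big_mkcond /=; case: ifP => [/andP[/forallP agree L_ans] | disagree].
  rewrite (big_pred1 [ffun o => L (out_wire Q o)]) // => y /=.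
  apply/and3P/eqP => [[_ /forallP L_y _] | ->].
    by apply/ffunP => o; rewrite ffunE (eqP (L_y o)).
  split; first by rewrite ffunE.
    by apply/forallP => o; rewrite ffunE.
  by apply/forallP => o; rewrite ffunE (eqP (agree o)).
apply: big1 => y /and3P[y_ans /forallP L_y /forallP L'_y]; move: disagree.
rewrite (eqP (L_y (answer Q))) y_ans andbT => /negP; case.
by apply/forallP => o; rewrite (eqP (L_y o)) (eqP (L'_y o)).
Qed.

Definition forward_part (l : {ffun TQ_edge Q -> bool}) : {ffun wire Q -> bool} :=
  [ffun e => l (inl e)].

Definition backward_part (l : {ffun TQ_edge Q -> bool}) : {ffun wire Q -> bool} :=
  [ffun e => l (mir e)].

Lemma map_forward_part (l : {ffun TQ_edge Q -> bool}) (s : seq (wire Q)) :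
  [seq l e | e <- map inl s] = [seq forward_part l e | e <- s].
Proof. by rewrite -map_comp; apply: eq_map => e; rewrite /= ffunE. Qed.

Lemma map_backward_part (l : {ffun TQ_edge Q -> bool}) (s : seq (wire Q)) :
  [seq l e | e <- map (@mir C Q) s] = [seq backward_part l e | e <- s].
Proof. by rewrite -map_comp; apply: eq_map => e; rewrite /= ffunE. Qed.

Lemma input_vertices_tensor (l : {ffun TQ_edge Q -> bool}) :
  \prod_(i < n_in Q) TQ_tensor x (inl (inl i)) [seq l e | e <- TQ_star (inl (inl i))] =
  init_state x (forward_part l).
Proof.
rewrite /init_state -prodr_indicator; apply: eq_bigr => i _.
by rewrite /= eqseq_cons andbT ffunE.
Qed.

Lemma output_vertices_tensor (l : {ffun TQ_edge Q -> bool}) :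
  \prod_(i < n_in Q) TQ_tensor x (inl (inr i)) [seq l e | e <- TQ_star (inl (inr i))] =
  init_state x (backward_part l).
Proof.
rewrite /init_state -prodr_indicator; apply: eq_bigr => i _.
by rewrite /= eqseq_cons andbT ffunE.
Qed.

Lemma gate_vertices_tensor (l : {ffun TQ_edge Q -> bool}) :
  \prod_(j < n_gates Q)
     TQ_tensor x (inr (inl (inl j))) [seq l e | e <- TQ_star (inr (inl (inl j)))] =
  \prod_(j < n_gates Q)
     gate_coef Q j [seq forward_part l e | e <- gate_in Q j]
                   [seq forward_part l e | e <- gate_out Q j].
Proof.
apply: eq_bigr => j _; rewrite /= map_cat !map_forward_part.
by rewrite take_size_cat ?drop_size_cat ?size_map.
Qed.

Lemma adjoint_vertices_tensor (l : {ffun TQ_edge Q -> bool}) :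
  \prod_(j < n_gates Q)
     TQ_tensor x (inr (inr j)) [seq l e | e <- TQ_star (inr (inr j))] =
  \prod_(j < n_gates Q)
     (gate_coef Q j [seq backward_part l e | e <- gate_in Q j]
                    [seq backward_part l e | e <- gate_out Q j])^*.
Proof.
apply: eq_bigr => j _; rewrite /= map_cat !map_backward_part.
by rewrite take_size_cat ?drop_size_cat ?size_map.
Qed.

Lemma projection_vertex_tensor (l : {ffun TQ_edge Q -> bool}) :
  \prod_(u : unit) TQ_tensor x (inr (inl (inr u))) [seq l e | e <- TQ_star (inr (inl (inr u)))] =
  if ~~ forward_part l (out_wire Q (answer Q)) && ~~ backward_part l (out_wire Q (answer Q))
  then 1 else 0.
Proof.
rewrite (big_pred1 tt); last by case.
by rewrite /= !eqseq_cons andbT !eqbF_neg !ffunE.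
Qed.

Lemma conj_weight L : (weight L)^* =
  init_state x L *
  \prod_(j < n_gates Q)
     (gate_coef Q j [seq L e | e <- gate_in Q j] [seq L e | e <- gate_out Q j])^*.
Proof.
rewrite rmorphM rmorph_prod; congr (_ * _).
by rewrite /init_state; case: ifP; rewrite ?rmorph1 ?rmorph0.
Qed.

Lemma TQ_vertex_prod (l : {ffun TQ_edge Q -> bool}) :
  \prod_(v : TQ_vertex Q) TQ_tensor x v [seq l e | e <- TQ_star v] =
  if ~~ forward_part l (out_wire Q (answer Q)) && ~~ backward_part l (out_wire Q (answer Q))
  then weight (forward_part l) * (weight (backward_part l))^* else 0.
Proof.
rewrite !big_sumType input_vertices_tensor output_vertices_tensor gate_vertices_tensor.
rewrite projection_vertex_tensor adjoint_vertices_tensor.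
rewrite conj_weight /weight /=.
by case: ifP => _; rewrite ?mulr1 ?mulr0 ?mul0r; ring.
Qed.

Lemma unmirroredP e :
  reflect (exists2 o, o != answer Q & out_wire Q o = e) (~~ mirrored e).
Proof.
rewrite /mirrored negb_forall; apply: (iffP existsP) => [[o] | [o o_ans <-]].
  by rewrite negb_imply => /andP[/eqP out_o o_ans]; exists o.
by exists o; rewrite eqxx.
Qed.

Definition agree_unmirrored (L L' : {ffun wire Q -> bool}) : bool :=
  [forall e, ~~ mirrored e ==> (L e == L' e)].

Lemma agree_unmirrored_answer (L L' : {ffun wire Q -> bool}) :
  agree_unmirrored L L' && (~~ L (out_wire Q (answer Q)) && ~~ L' (out_wire Q (answer Q))) =
  [forall o, L (out_wire Q o) == L' (out_wire Q o)] && ~~ L (out_wire Q (answer Q)).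
Proof.
rewrite /agree_unmirrored.
apply/idP/idP => [/and3P[/forallP agree L_ans L'_ans] | /andP[/forallP agree L_ans]].
  rewrite L_ans andbT; apply/forallP => o; have [-> | o_ans] := eqVneq o (answer Q).
    by rewrite (negbTE L_ans) (negbTE L'_ans).
  by apply: (implyP (agree _)); apply/unmirroredP; exists o.
rewrite -(eqP (agree (answer Q))) L_ans !andbT.
by apply/forallP => e; apply/implyP => /unmirroredP[o _ <-]; apply: agree.
Qed.

Definition glue (p : {ffun wire Q -> bool} * {ffun wire Q -> bool}) : {ffun TQ_edge Q -> bool} :=
  [ffun ed => match ed with inl e => p.1 e | inr u => p.2 (val u) end].

Lemma mir_mirrored (u : {e : wire Q | mirrored e}) : @mir C Q (val u) = inr u.
Proof. by rewrite /mir valK. Qed.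

Lemma mir_unmirrored e : ~~ mirrored e -> @mir C Q e = inl e.
Proof. by move=> e_unmirrored; rewrite /mir insubN. Qed.

Lemma parts_glue p : agree_unmirrored p.1 p.2 ->
  (forward_part (glue p), backward_part (glue p)) = p.
Proof.
case: p => L L' /forallP /= agree; congr pair; apply/ffunP => e; rewrite !ffunE //.
rewrite /mir; case: insubP => [u _ <- // | e_unmirrored] /=.
exact/eqP/(implyP (agree e)).
Qed.

Lemma glue_parts l : glue (forward_part l, backward_part l) = l.
Proof. by apply/ffunP => -[e | u]; rewrite !ffunE //= mir_mirrored. Qed.

Lemma agree_unmirrored_parts l : agree_unmirrored (forward_part l) (backward_part l).
Proof.
by apply/forallP => e; apply/implyP => e_unmirrored; rewrite !ffunE mir_unmirrored.
Qed.

Lemma tc_value_TQ : tc_value (TQ x) =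
  \sum_(L : {ffun wire Q -> bool}) \sum_(L' : {ffun wire Q -> bool})
    (if agree_unmirrored L L' && (~~ L (out_wire Q (answer Q)) && ~~ L' (out_wire Q (answer Q)))
     then weight L * (weight L')^* else 0).
Proof.
pose F (p : {ffun wire Q -> bool} * {ffun wire Q -> bool}) :=
  if ~~ p.1 (out_wire Q (answer Q)) && ~~ p.2 (out_wire Q (answer Q))
  then weight p.1 * (weight p.2)^* else 0.
rewrite pair_big /= (eq_bigr (fun p => if agree_unmirrored p.1 p.2 then F p else 0)); last first.
  by move=> [L L'] _; rewrite /F /=; case: agree_unmirrored.
rewrite -big_mkcond (reindex_onto (fun l => (forward_part l, backward_part l)) glue) /=.
  apply: eq_big => [l | l _]; last by rewrite TQ_vertex_prod.
  by rewrite agree_unmirrored_parts glue_parts eqxx.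
exact: parts_glue.
Qed.

End Circuit.

Unset Implicit Arguments.
Theorem lemma4 (C : numClosedFieldType) (Q : opcircuit C)
  (x : 'I_(n_in Q) -> bool) :
  @wf_circuit C Q ->
  tc_value (@TQ C Q x) = norm2 (@circ_out0 C Q x).
Proof.
move=> wfQ; rewrite tc_value_TQ (norm2_circ_out0 x wfQ).
by apply: eq_bigr => L _; apply: eq_bigr => L' _; rewrite agree_unmirrored_answer.
Qed.
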